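(* Consider the ring grooming instance with $n=9$, $c=1$ and traffic demands $\{1,2\},\{1,3\},\{2,3\},\{4,5\},\{4,6\},\{5,6\},\{7,8\},\{7,9\},\{8,9\}$ (each once). Then: (i) the minimum number of ADMs is $m=9$; (ii) every feasible routing achieving $9$ ADMs uses at least $3$ rings carrying traffic; (iii) there is a feasible routing using only $2$ rings carrying traffic; hence the number of rings carrying traffic and the number of ADMs cannot be minimized simultaneously for this instance.
   Context: Ring grooming. An instance consists of integers $n\ge 2$ (ring size) and $c\ge 1$ (capacity), and a finite list $L$ of unordered pairs $\{j,k\}$ with $j\ne k$, $j,k\in\{1,\dots,n\}$ (repetitions allowed); these are the traffic demands. Let $d_{jk}=d_{kj}$ be the number of times $\{j,k\}$ occurs in $L$ (the traffic matrix; $d_{jj}=0$). Let $C_n$ be the cycle graph on vertices $1,\dots,n$ in cyclic order, with edges $\{l,l+1\}$ for $1\le l<n$ and $\{n,1\}$. A solution uses some finite number $r$ of ''rings'', each a copy of $C_n$ in which every edge has capacity $c$. A routing specifies, for every ring $i$ and every pair $j<k$, nonnegative integers $t^0_{ijk},t^1_{ijk}$: the amounts of $\{j,k\}$-traffic sent on ring $i$ along each of the two arcs of $C_n$ between $j$ and $k$. It is feasible if $\sum_i (t^0_{ijk}+t^1_{ijk})=d_{jk}$ for all $j<k$, and for every ring $i$ and every edge $e$ of $C_n$ the total traffic routed on ring $i$ along arcs containing $e$ is at most $c$. Ring $i$ needs an ADM (add/drop multiplexer) at vertex $j$ iff some traffic with endpoint $j$ is routed on ring $i$. The cost of a routing is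 the total number of ADMs, i.e. the number of pairs (ring $i$, vertex $j$) at which an ADM is needed. $m=m(n,c,L)$ denotes the minimum cost over all feasible routings. *)

From mathcomp Require Import all_boot.
Set Implicit Arguments. Unset Strict Implicit. Unset Printing Implicit Defensive.

(* Ring vertices 1..n are represented by ordinals v : 'I_n, with v standing
   for vertex v+1.  Edge e : 'I_n is the edge {e+1, e+2} (and edge n-1 is {n,1}).
   Traffic demands L are given with the paper's labels 1..n. *)

Definition demand (n : nat) (L : seq (nat * nat)) (j k : 'I_n) : nat :=
  count (fun p => (p == (j.+1, k.+1)) || (p == (k.+1, j.+1))) L.

(* A routing on r rings: t i j k b = t^b_{ijk} (b = false: arc 0, b = true: arc 1),
   only entries with j < k are meaningful.
   Arc 0 between j < k is the path j, j+1, ..., k: it contains edge e iff j <= e < k.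
   Arc 1 is the complementary arc. *)
Definition routing (n r : nat) := 'I_r -> 'I_n -> 'I_n -> bool -> nat.

Definition on_arc0 (n : nat) (j k e : 'I_n) : bool := (j <= e) && (e < k).

Definition edge_load (n r : nat) (t : routing n r) (i : 'I_r) (e : 'I_n) : nat :=
  \sum_(j < n) \sum_(k < n | j < k)
     (if on_arc0 j k e then t i j k false else t i j k true).

Definition feasible (n c : nat) (L : seq (nat * nat)) (r : nat) (t : routing n r) : Prop :=
  (forall j k : 'I_n, j < k ->
     \sum_(i < r) (t i j k false + t i j k true) = demand L j k) /\
  (forall (i : 'I_r) (e : 'I_n), edge_load t i e <= c).

Definition needs_adm (n r : nat) (t : routing n r) (i : 'I_r) (v : 'I_n) : bool :=
  [exists j : 'I_n, exists k : 'I_n,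
     [&& j < k, (j == v) || (k == v) & 0 < t i j k false + t i j k true]].

Definition cost (n r : nat) (t : routing n r) : nat :=
  #|[set p : 'I_r * 'I_n | needs_adm t p.1 p.2]|.

Definition carries (n r : nat) (t : routing n r) (i : 'I_r) : bool :=
  [exists j : 'I_n, exists k : 'I_n, (j < k) && (0 < t i j k false + t i j k true)].

Definition rings_used (n r : nat) (t : routing n r) : nat :=
  #|[set i : 'I_r | carries t i]|.

Definition is_min_cost (n c : nat) (L : seq (nat * nat)) (m : nat) : Prop :=
  (exists r (t : routing n r), feasible c L t /\ cost t = m) /\
  (forall r (t : routing n r), feasible c L t -> m <= cost t).

Definition L_ex : seq (nat * nat) :=
  [:: (1,2); (1,3); (2,3); (4,5); (4,6); (5,6); (7,8); (7,9); (8,9)].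

From mathcomp Require Import all_boot zify.

(* Every vertex is an endpoint of a demand, and each ring carrying a demand needs
   ADMs at both of its ends, so at least 9 ADMs are needed; with exactly 9, the
   ADMs of each vertex sit on a single ring, which forces each triangle of demands
   onto one ring.  On a ring of capacity 1 the three arcs routing a triangle load
   the edges with a common parity, so either some edge is loaded twice or every
   edge is loaded at least once; hence no two triangles share a ring and three
   rings are needed.  One ring per triangle attains 9 ADMs, while one ring for all
   pairs {j, j+1} and one for the pairs {3m+1, 3m+3} carry everything on 2 rings. *)

Set Implicit Arguments. Unset Strict Implicit. Unset Printing Implicit Defensive.

Section Routing.

Variables (n r : nat) (t : routing n r).

Definition carried (i : 'I_r) (j k : 'I_n) := 0 < t i j k false + t i j k true.

Definition arc_load (i : 'I_r) (j k e : 'I_n) :=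
  if on_arc0 j k e then t i j k false else t i j k true.

Definition adm_set := [set p : 'I_r * 'I_n | needs_adm t p.1 p.2].

Lemma needs_adm_carried i (j k : 'I_n) :
  j < k -> carried i j k -> needs_adm t i j && needs_adm t i k.
Proof.
by move=> ltjk cijk; apply/andP; split; apply/existsP; exists j; apply/existsP;
  exists k; rewrite ltjk eqxx ?orbT.
Qed.

Lemma carries_of_carried i (j k : 'I_n) : j < k -> carried i j k -> carries t i.
Proof.
by move=> ltjk cijk; apply/existsP; exists j; apply/existsP; exists k; rewrite ltjk.
Qed.

Lemma demand_carried c L (j k : 'I_n) :
  feasible c L t -> j < k -> 0 < demand L j k -> exists i, carried i j k.
Proof.
move=> [tot _] ltjk; rewrite -(tot j k ltjk).
case: (pickP (fun i => carried i j k)) => [i ci | none]; first by exists i.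
by rewrite big1 // => i _; move: (none i); rewrite /carried lt0n => /negbFE/eqP.
Qed.

Lemma sum_arc_load_le (i : 'I_r) (e : 'I_n) (s : seq ('I_n * 'I_n)) :
  uniq s -> all (fun p : 'I_n * 'I_n => p.1 < p.2) s ->
  \sum_(p <- s) arc_load i p.1 p.2 e <= edge_load t i e.
Proof.
move=> uniq_s lt_s; rewrite /edge_load pair_big_dep /= (big_uniq _ uniq_s).
rewrite big_mkcond [X in _ <= X]big_mkcond /=; apply: leq_sum => p _.
by case: ifP => // ps; rewrite (allP lt_s p ps); case: p ps.
Qed.

Lemma arc_load_ge i (j k e : 'I_n) :
  carried i j k -> (on_arc0 j k e != (t i j k false == 0)) <= arc_load i j k e.
Proof. by rewrite /carried /arc_load; case: (t i j k false) => [|m]; case: ifP. Qed.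

End Routing.

Section Triangle.

Variables (n r : nat) (t : routing n r) (i : 'I_r) (a b c : 'I_n).
Hypotheses (ltab : a < b) (ltbc : b < c).

Definition triangle_load (e : 'I_n) :=
  arc_load t i a b e + arc_load t i a c e + arc_load t i b c e.

Definition triangle_arcs (e : 'I_n) :=
  (on_arc0 a b e, on_arc0 a c e, on_arc0 b c e).

Lemma triangle_arcs_cases e :
  triangle_arcs e \in [:: (true, true, false); (false, true, true); (false, false, false)].
Proof.
rewrite /triangle_arcs /on_arc0 !inE.
have [lebe|ltbe] := leqP b e; have [lece|ltce] := leqP c e;
  have [leae|ltae] := leqP a e; rewrite ?andbT ?andbF //=; lia.
Qed.

Lemma triangle_arcs_vertices :
  [/\ triangle_arcs a = (true, true, false), triangle_arcs b = (false, true, true)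
     & triangle_arcs c = (false, false, false)].
Proof. by rewrite /triangle_arcs /on_arc0; split; congr (_, _, _); lia. Qed.

Hypotheses (cab : carried t i a b) (cac : carried t i a c) (cbc : carried t i b c).

Lemma triangle_load_cases :
  (forall e, 0 < triangle_load e) \/ (exists e, 1 < triangle_load e).
Proof.
pose dist (p q : bool * bool * bool) := (p.1.1 != q.1.1) + (p.1.2 != q.1.2) + (p.2 != q.2).
pose outer := (t i a b false == 0, t i a c false == 0, t i b c false == 0).
have load_ge e : dist (triangle_arcs e) outer <= triangle_load e.
  by rewrite /dist /= !leq_add ?arc_load_ge.
have [arcs_a arcs_b arcs_c] := triangle_arcs_vertices.
(* The three arc patterns are pairwise at even Hamming distance, so their
   distances to [outer] have equal parity and cannot all vanish. *)
have : forall q, [&& 0 < dist (true, true, false) q, 0 < dist (false, true, true) q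
                  & 0 < dist (false, false, false) q]
    || [|| 1 < dist (true, true, false) q, 1 < dist (false, true, true) q
         | 1 < dist (false, false, false) q].
  by case=> [[[] []] []].
move/(_ outer).
case/orP=> [/and3P[ga gb gc] | /or3P[g2|g2|g2]]; [left | right..].
- move=> e; apply: leq_trans (load_ge e).
  by have := triangle_arcs_cases e; rewrite !inE => /or3P[] /eqP ->.
- by exists a; apply: leq_trans (load_ge a); rewrite arcs_a.
- by exists b; apply: leq_trans (load_ge b); rewrite arcs_b.
- by exists c; apply: leq_trans (load_ge c); rewrite arcs_c.
Qed.

End Triangle.

Lemma ring_carries_one_triangle n r (t : routing n r) (i : 'I_r) (a b c a' b' c' : 'I_n) :
  (forall e, edge_load t i e <= 1) ->
  a < b -> b < c -> c < a' -> a' < b' -> b' < c' ->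
  [&& carried t i a b, carried t i a c & carried t i b c] ->
  [&& carried t i a' b', carried t i a' c' & carried t i b' c'] -> False.
Proof.
move=> cap ltab ltbc ltca' lta'b' ltb'c' /and3P[cab cac cbc] /and3P[ca'b' ca'c' cb'c'].
have loads_le e :
    triangle_load t i a b c e + triangle_load t i a' b' c' e <= edge_load t i e.
  have := sum_arc_load_le t i e
    (s := [:: (a, b); (a, c); (b, c); (a', b'); (a', c'); (b', c')]).
  rewrite !big_cons big_nil addn0 !addnA; apply.
    by rewrite /= !inE !xpair_eqE -!val_eqE /=; repeat (apply/andP; split); lia.
  by rewrite /= ltab ltbc lta'b' ltb'c' (ltn_trans ltab ltbc) (ltn_trans lta'b' ltb'c').
have [pos|[e two]] := triangle_load_cases ltab ltbc cab cac cbc; last first.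
  by have := leq_trans (leq_trans two (leq_addr _ _)) (leq_trans (loads_le e) (cap e)).
have [pos'|[e two]] := triangle_load_cases lta'b' ltb'c' ca'b' ca'c' cb'c'; last first.
  by have := leq_trans (leq_trans two (leq_addl _ _)) (leq_trans (loads_le e) (cap e)).
by have := leq_trans (leq_add (pos a) (pos' a)) (leq_trans (loads_le a) (cap a)).
Qed.

Definition vertices_demanded n (L : seq (nat * nat)) :=
  forall v : 'I_n, exists j k : 'I_n, [/\ j < k, v \in [:: j; k] & 0 < demand L j k].

Section AdmCount.

Variables (n r cap : nat) (L : seq (nat * nat)) (t : routing n r).
Hypotheses (feas : feasible cap L t) (demanded : vertices_demanded n L).

Lemma adm_set_vertices : snd @: adm_set t = [set: 'I_n].
Proof.
apply/setP => v; rewrite inE; have [j [k [ltjk vjk djk]]] := demanded v.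
have [i /(needs_adm_carried ltjk)/andP[admj admk]] := demand_carried feas ltjk djk.
apply/imsetP; exists (i, v) => //; rewrite inE.
by move: vjk; rewrite !inE => /orP[] /eqP ->.
Qed.

Lemma cost_ge : n <= cost t.
Proof.
by have := leq_imset_card snd (adm_set t); rewrite adm_set_vertices cardsT card_ord.
Qed.

(* With exactly n ADMs, projecting the ADM set onto its vertices is injective. *)
Lemma adm_ring_unique i i' v :
  cost t = n -> needs_adm t i v -> needs_adm t i' v -> i = i'.
Proof.
move=> cost_n admi admi'.
have /imset_injP inj : #|snd @: adm_set t| == #|adm_set t|.
  by rewrite adm_set_vertices cardsT card_ord; apply/eqP; exact: esym cost_n.
by have := inj (i, v) (i', v); rewrite !inE => /(_ admi admi' erefl) [].
Qed.

Lemma triangle_on_one_ring (a b c : 'I_n) :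
  cost t = n -> a < b -> b < c ->
  0 < demand L a b -> 0 < demand L a c -> 0 < demand L b c ->
  exists i, [&& carried t i a b, carried t i a c & carried t i b c].
Proof.
move=> cost_n ltab ltbc dab dac dbc; have ltac := ltn_trans ltab ltbc.
have [i cab] := demand_carried feas ltab dab.
have [i2 cac] := demand_carried feas ltac dac.
have [i3 cbc] := demand_carried feas ltbc dbc.
have /andP[adm_ia adm_ib] := needs_adm_carried ltab cab.
have /andP[adm_i2a _] := needs_adm_carried ltac cac.
have /andP[adm_i3b _] := needs_adm_carried ltbc cbc.
rewrite -(adm_ring_unique cost_n adm_ia adm_i2a) in cac.
rewrite -(adm_ring_unique cost_n adm_ib adm_i3b) in cbc.
by exists i; rewrite cab cac cbc.
Qed.

End AdmCount.

Lemma cost_le_of_adm_ring n r (t : routing n r) (f : 'I_n -> 'I_r) :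
  (forall i v, needs_adm t i v -> i = f v) -> cost t <= n.
Proof.
move=> adm_f; rewrite -[X in _ <= X]card_ord -cardsT.
apply: leq_trans (leq_imset_card (fun v => (f v, v)) _).
apply/subset_leq_card/subsetP => -[i v]; rewrite inE => /= admiv.
by apply/imsetP; exists v; rewrite ?inE // -(adm_f i v admiv).
Qed.

Local Notation vtx k := (@Ordinal 9 k isT).

Ltac case_vertex := case=> [[|[|[|[|[|[|[|[|[|//]]]]]]]]]] ?.

Ltac expand_ordinal_sums :=
  rewrite bigop.unlock /index_enum !locked_withE -!enumT !enum_ordSl ?enum_ord0.

Lemma L_ex_vertices_demanded : vertices_demanded 9 L_ex.
Proof.
case_vertex; [exists (vtx 0), (vtx 1) | exists (vtx 0), (vtx 1) | exists (vtx 0), (vtx 2)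
  | exists (vtx 3), (vtx 4) | exists (vtx 3), (vtx 4) | exists (vtx 3), (vtx 5)
  | exists (vtx 6), (vtx 7) | exists (vtx 6), (vtx 7) | exists (vtx 6), (vtx 8)]; by [].
Qed.

Lemma min_cost_routing_uses_three_rings r (t : routing 9 r) :
  feasible 1 L_ex t -> cost t = 9 -> 3 <= rings_used t.
Proof.
move=> feas cost9; have [_ cap] := feas.
have triangle := triangle_on_one_ring feas L_ex_vertices_demanded cost9.
have [i1 tri1] := triangle (vtx 0) (vtx 1) (vtx 2) isT isT isT isT isT.
have [i2 tri2] := triangle (vtx 3) (vtx 4) (vtx 5) isT isT isT isT isT.
have [i3 tri3] := triangle (vtx 6) (vtx 7) (vtx 8) isT isT isT isT isT.
have ne12 : i1 != i2.
  by apply/eqP=> eq12; rewrite -eq12 in tri2; apply: ring_carries_one_triangle tri1 tri2.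
have ne13 : i1 != i3.
  by apply/eqP=> eq13; rewrite -eq13 in tri3; apply: ring_carries_one_triangle tri1 tri3.
have ne23 : i2 != i3.
  by apply/eqP=> eq23; rewrite -eq23 in tri3; apply: ring_carries_one_triangle tri2 tri3.
have carrying : i1 |: [set i2; i3] \subset [set i | carries t i].
  move: tri1 tri2 tri3 => /and3P[c1 _ _] /and3P[c2 _ _] /and3P[c3 _ _].
  apply/subsetP => i; rewrite !inE => /or3P[] /eqP ->.
  - exact: carries_of_carried c1.
  - exact: carries_of_carried c2.
  - exact: carries_of_carried c3.
apply: leq_trans (subset_leq_card carrying).
by rewrite cardsU1 cards2 in_set2 (negPf ne12) (negPf ne13) ne23.
Qed.

Definition ring_per_triangle : routing 9 3 := fun i j k arc1 =>
  [&& j %/ 3 == i, k %/ 3 == i & if arc1 then k == j + 2 :> nat else k == j.+1 :> nat].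

Definition two_ring_routing : routing 9 2 := fun i j k arc1 =>
  [&& ~~ arc1, j %/ 3 == k %/ 3 & k == j + i.+1 :> nat].

Lemma ring_per_triangle_feasible : feasible 1 L_ex ring_per_triangle.
Proof.
split=> [j k | i e]; rewrite ?/edge_load; expand_ordinal_sums.
  by move: j k; case_vertex; case_vertex; vm_compute.
by move: i e => [[|[|[|//]]]] ?; case_vertex; vm_compute.
Qed.

Lemma ring_per_triangle_cost : cost ring_per_triangle = 9.
Proof.
apply/eqP; rewrite eqn_leq (cost_ge ring_per_triangle_feasible L_ex_vertices_demanded) andbT.
apply: (@cost_le_of_adm_ring _ _ _ (fun v => inord (v %/ 3))) => i v.
move=> /existsP[j /existsP[k /and3P[_ vjk]]]; rewrite /ring_per_triangle.
case: eqP => // ji; case: eqP => // ki _; apply: val_inj; rewrite /= inordK.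
  by case/orP: vjk => /eqP <-.
by rewrite ltn_divLR.
Qed.

Lemma two_ring_routing_feasible : feasible 1 L_ex two_ring_routing.
Proof.
split=> [j k | i e]; rewrite ?/edge_load; expand_ordinal_sums.
  by move: j k; case_vertex; case_vertex; vm_compute.
by move: i e => [[|[|//]]] ?; case_vertex; vm_compute.
Qed.

Lemma two_ring_routing_rings_used : rings_used two_ring_routing = 2.
Proof.
rewrite /rings_used.
suff -> : [set i | carries two_ring_routing i] = setT by rewrite cardsT card_ord.
apply/setP => i; rewrite !inE.
by move: i => [[|[|//]]] ?; [apply: (@carries_of_carried _ _ _ _ (vtx 0) (vtx 1))
  | apply: (@carries_of_carried _ _ _ _ (vtx 0) (vtx 2))].
Qed.

Theorem mainTheorem5 :
  is_min_cost 9 1 L_ex 9 /\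
  (forall r (t : routing 9 r), feasible 1 L_ex t -> cost t = 9 -> 3 <= rings_used t) /\
  (exists r (t : routing 9 r), feasible 1 L_ex t /\ rings_used t = 2).
Proof.
split; [split | split].
- exists 3, ring_per_triangle.
  by split; [exact: ring_per_triangle_feasible | exact: ring_per_triangle_cost].
- by move=> r t feas; apply: cost_ge feas L_ex_vertices_demanded.
- exact: min_cost_routing_uses_three_rings.
- exists 2, two_ring_routing.
  by split; [exact: two_ring_routing_feasible | exact: two_ring_routing_rings_used].
Qed.
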